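(* Assume (A1)–(A4), let $b$ be consistent, $\delta>0$, $\tau>1$, $\|b^\delta-b\|\le\delta$, and let $k_\delta$ be the first index $k\ge1$ with $\rho_1^2\|Ax_k^\delta-b^\delta\|^2+\rho_2^2\|Wx_k^\delta-y_k^\delta\|^2\le\max(\rho_1^2,\rho_2^2)\tau^2\delta^2$. Then there exist constants $c,C>0$ depending only on $\rho_2,\tau,c_0$ such that for every integer $1\le m<k_\delta-1$ and every feasible point $(\hat x,\hat y)$, $$D_{\mu_{k_\delta}^\delta}f(\hat y,y_{k_\delta}^\delta)+cE_{k_\delta}^\delta\le D_{\mu_m^\delta}f(\hat y,y_m^\delta)+\max\{\rho_1,\rho_2\}\tau\delta^2+C\|W(\hat x-x_m^\delta)\|^2+CE_m^\delta+C\|s_m^\delta\|^2+C\big|\langle y_{m-1}^\delta-y_m^\delta,W(\hat x-x_{m+1}^\delta)\rangle\big|$$ and $$\big|\langle\mu_{k_\delta}^\delta,y_{k_\delta}^\delta-\hat y\rangle\big|\le\big|\langle\mu_m^\delta,y_{k_\delta}^\delta-\hat y\rangle\big|+\max\{\rho_1,\rho_2\}\tau\delta^2+C\sum_{k=m}^{k_\delta}E_k^\delta+C\|W(x_{k_\delta}^\delta-\hat x)\|^2.$$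
   Context: $\mathcal X,\mathcal Y,\mathcal H$ are real Hilbert spaces. Standing assumptions: (A1) $A:\mathcal X\to\mathcal H$ is bounded linear. (A2) $f:\mathcal Y\to(-\infty,\infty]$ is proper, lower semicontinuous and strongly convex with constant $c_0>0$: $f(ty_1+(1-t)y_2)+c_0t(1-t)\|y_1-y_2\|^2\le tf(y_1)+(1-t)f(y_2)$ for all $y_1,y_2$, $t\in[0,1]$. (A3) $W:\mathscr D(W)\subset\mathcal X\to\mathcal Y$ is a densely defined closed linear operator. (A4) There is $c_1>0$ with $\|Ax\|^2+\|Wx\|^2\ge c_1\|x\|^2$ for all $x\in\mathscr D(W)$. $\mathscr D(f)=\{y:f(y)<\infty\}$; $b$ is consistent if $b=Ax$ for some $x\in\mathscr D(W)$ with $Wx\in\mathscr D(f)$. A feasible point is a pair $(\hat x,\hat y)$ with $\hat x\in\mathscr D(W)$, $\hat y\in\mathscr D(f)$, $A\hat x=b$, $W\hat x=\hat y$. Noisy ADMM: fix $\rho_1,\rho_2>0$ and initial $y_0^\delta\in\mathcal Y$, $\lambda_0^\delta\in\mathcal H$, $\mu_0^\delta\in\mathcal Y$. For $k=0,1,\dots$: $x_{k+1}^\delta=\arg\min_{x\in\mathscr D(W)}\{\langle\lambda_k^\delta,Ax\rangle+\langle\mu_k^\delta,Wx\rangle+\frac{\rho_1}{2}\|Ax-b^\delta\|^2+\frac{\rho_2}{2}\|Wx-y_k^\delta\|^2\}$, $y_{k+1}^\delta=\arg\min_{y\in\mathcal Y}\{f(y)-\langle\mu_k^\delta,y\rangle+\frac{\rho_2}{2}\|Wx_{k+1}^\delta-y\|^2\}$,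 $\lambda_{k+1}^\delta=\lambda_k^\delta+\rho_1(Ax_{k+1}^\delta-b^\delta)$, $\mu_{k+1}^\delta=\mu_k^\delta+\rho_2(Wx_{k+1}^\delta-y_{k+1}^\delta)$. (These minimizers exist and are unique; $\mu_k^\delta\in\partial f(y_k^\delta)$ for $k\ge1$.) Notation: $r_k^\delta=Ax_k^\delta-b^\delta$, $s_k^\delta=Wx_k^\delta-y_k^\delta$, $E_k^\delta=\rho_1\|r_k^\delta\|^2+\rho_2\|s_k^\delta\|^2+\rho_2\|y_k^\delta-y_{k-1}^\delta\|^2$ for $k\ge1$. Bregman distance: for $y$ with $\mu\in\partial f(y)$, $D_\mu f(\bar y,y)=f(\bar y)-f(y)-\langle\mu,\bar y-y\rangle$. *)

From Stdlib Require Import Reals.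
Open Scope R_scope.

Record Hilbert : Type := mkHilbert {
  hcar :> Type;
  hadd : hcar -> hcar -> hcar;
  hopp : hcar -> hcar;
  hzero : hcar;
  hscal : R -> hcar -> hcar;
  hinner : hcar -> hcar -> R;
  hadd_assoc : forall x y z, hadd x (hadd y z) = hadd (hadd x y) z;
  hadd_comm : forall x y, hadd x y = hadd y x;
  hadd_0 : forall x, hadd x hzero = x;
  hadd_opp : forall x, hadd x (hopp x) = hzero;
  hscal_assoc : forall a b x, hscal a (hscal b x) = hscal (a * b) x;
  hscal_1 : forall x, hscal 1 x = x;
  hscal_distr_l : forall a x y, hscal a (hadd x y) = hadd (hscal a x) (hscal a y);
  hscal_distr_r : forall a b x, hscal (a + b) x = hadd (hscal a x) (hscal b x);
  hinner_sym : forall x y, hinner x y = hinner y x;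
  hinner_add_l : forall x y z, hinner (hadd x y) z = hinner x z + hinner y z;
  hinner_scal_l : forall a x y, hinner (hscal a x) y = a * hinner x y;
  hinner_pos : forall x, 0 <= hinner x x;
  hinner_def : forall x, hinner x x = 0 -> x = hzero;
  hcomplete : forall u : nat -> hcar,
    (forall eps, 0 < eps -> exists N, forall n m, (N <= n)%nat -> (N <= m)%nat ->
        sqrt (hinner (hadd (u n) (hopp (u m))) (hadd (u n) (hopp (u m)))) < eps) ->
    exists l, forall eps, 0 < eps -> exists N, forall n, (N <= n)%nat ->
        sqrt (hinner (hadd (u n) (hopp l)) (hadd (u n) (hopp l))) < eps
}.

Arguments hadd {h} _ _.
Arguments hopp {h} _.
Arguments hzero {h}.
Arguments hscal {h} _ _.
Arguments hinner {h} _ _.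

Definition hsub {H : Hilbert} (x y : H) : H := hadd x (hopp y).
Definition hnorm {H : Hilbert} (x : H) : R := sqrt (hinner x x).

Definition converges {H : Hilbert} (u : nat -> H) (l : H) : Prop :=
  forall eps, 0 < eps -> exists N, forall n, (N <= n)%nat -> hnorm (hsub (u n) l) < eps.

Definition bounded_linear {X H : Hilbert} (A : X -> H) : Prop :=
  (forall x y, A (hadd x y) = hadd (A x) (A y)) /\
  (forall a x, A (hscal a x) = hscal a (A x)) /\
  (exists M, forall x, hnorm (A x) <= M * hnorm x).

(* (A3) densely defined closed linear operator W with domain DW
   (W is a total function; its values outside DW are irrelevant). *)
Definition densely_defined_closed {X Y : Hilbert} (DW : X -> Prop) (W : X -> Y) : Prop :=
  DW hzero /\
  (forall x z, DW x -> DW z -> DW (hadd x z)) /\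
  (forall a x, DW x -> DW (hscal a x)) /\
  (forall x z, DW x -> DW z -> W (hadd x z) = hadd (W x) (W z)) /\
  (forall a x, DW x -> W (hscal a x) = hscal a (W x)) /\
  (forall x eps, 0 < eps -> exists z, DW z /\ hnorm (hsub x z) < eps) /\
  (forall (u : nat -> X) x v, (forall n, DW (u n)) -> converges u x ->
     converges (fun n => W (u n)) v -> DW x /\ W x = v).

(* Extended reals (-oo excluded): values of f : Y -> (-oo, +oo]. *)
Inductive ereal : Type := Fin (r : R) | PInf.

Definition ele (a b : ereal) : Prop :=
  match a, b with
  | _, PInf => True
  | PInf, Fin _ => False
  | Fin x, Fin y => x <= y
  end.

Definition eplus (a : ereal) (r : R) : ereal :=
  match a with Fin x => Fin (x + r) | PInf => PInf end.

Definition fval (a : ereal) : R := match a with Fin x => x | PInf => 0 end.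

Definition in_dom {Y : Hilbert} (f : Y -> ereal) (y : Y) : Prop := f y <> PInf.

Definition proper {Y : Hilbert} (f : Y -> ereal) : Prop := exists y, in_dom f y.

Definition lsc {Y : Hilbert} (f : Y -> ereal) : Prop :=
  forall (u : nat -> Y) y r, converges u y ->
    (forall n, ele (f (u n)) (Fin r)) -> ele (f y) (Fin r).

(* (A2) strong convexity with constant c0 (inequality is trivial if
   f y1 or f y2 is +oo, with the convention 0 * oo = 0). *)
Definition strongly_convex {Y : Hilbert} (f : Y -> ereal) (c0 : R) : Prop :=
  forall (y1 y2 : Y) (t a b : R), 0 <= t <= 1 -> f y1 = Fin a -> f y2 = Fin b ->
    exists v, f (hadd (hscal t y1) (hscal (1 - t) y2)) = Fin v /\
      v + c0 * t * (1 - t) * (hnorm (hsub y1 y2)) ^ 2 <= t * a + (1 - t) * b.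

Definition coercive_pair {X H Y : Hilbert} (A : X -> H) (DW : X -> Prop) (W : X -> Y) : Prop :=
  exists c1, 0 < c1 /\ forall x, DW x -> (hnorm (A x)) ^ 2 + (hnorm (W x)) ^ 2 >= c1 * (hnorm x) ^ 2.

Definition consistent {X H Y : Hilbert} (A : X -> H) (DW : X -> Prop) (W : X -> Y)
  (f : Y -> ereal) (b : H) : Prop :=
  exists x, DW x /\ in_dom f (W x) /\ A x = b.

Definition feasible {X H Y : Hilbert} (A : X -> H) (DW : X -> Prop) (W : X -> Y)
  (f : Y -> ereal) (b : H) (xh : X) (yh : Y) : Prop :=
  DW xh /\ in_dom f yh /\ A xh = b /\ W xh = yh.

(* Noisy ADMM: the sequences x, y, lam, mu satisfy the iteration for all k
   (x 0 is unused; y 0, lam 0, mu 0 are the arbitrary initial values). *)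
Definition admm {X H Y : Hilbert} (A : X -> H) (DW : X -> Prop) (W : X -> Y)
  (f : Y -> ereal) (rho1 rho2 : R) (bd : H)
  (x : nat -> X) (y : nat -> Y) (lam : nat -> H) (mu : nat -> Y) : Prop :=
  forall k : nat,
    (DW (x (S k)) /\
      forall z, DW z ->
        hinner (lam k) (A (x (S k))) + hinner (mu k) (W (x (S k)))
        + rho1 / 2 * (hnorm (hsub (A (x (S k))) bd)) ^ 2
        + rho2 / 2 * (hnorm (hsub (W (x (S k))) (y k))) ^ 2
        <= hinner (lam k) (A z) + hinner (mu k) (W z)
        + rho1 / 2 * (hnorm (hsub (A z) bd)) ^ 2
        + rho2 / 2 * (hnorm (hsub (W z) (y k))) ^ 2) /\
    (forall z,
       ele (eplus (f (y (S k))) (- hinner (mu k) (y (S k))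
                                 + rho2 / 2 * (hnorm (hsub (W (x (S k))) (y (S k)))) ^ 2))
           (eplus (f z) (- hinner (mu k) z + rho2 / 2 * (hnorm (hsub (W (x (S k))) z)) ^ 2))) /\
    lam (S k) = hadd (lam k) (hscal rho1 (hsub (A (x (S k))) bd)) /\
    mu (S k) = hadd (mu k) (hscal rho2 (hsub (W (x (S k))) (y (S k)))).

(* E_k for k >= 1 *)
Definition Ek {X H Y : Hilbert} (A : X -> H) (W : X -> Y) (rho1 rho2 : R) (bd : H)
  (x : nat -> X) (y : nat -> Y) (k : nat) : R :=
  rho1 * (hnorm (hsub (A (x k)) bd)) ^ 2 + rho2 * (hnorm (hsub (W (x k)) (y k))) ^ 2
  + rho2 * (hnorm (hsub (y k) (y (k - 1)%nat))) ^ 2.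

Definition bregman {Y : Hilbert} (f : Y -> ereal) (mu : Y) (yb y : Y) : R :=
  fval (f yb) - fval (f y) - hinner mu (hsub yb y).

Definition stop_cond {X H Y : Hilbert} (A : X -> H) (W : X -> Y) (rho1 rho2 tau delta : R)
  (bd : H) (x : nat -> X) (y : nat -> Y) (k : nat) : Prop :=
  rho1 ^ 2 * (hnorm (hsub (A (x k)) bd)) ^ 2 + rho2 ^ 2 * (hnorm (hsub (W (x k)) (y k))) ^ 2
  <= Rmax (rho1 ^ 2) (rho2 ^ 2) * tau ^ 2 * delta ^ 2.

(* A discrete Lyapunov argument.  With r k = A x k - b^delta, s k = W x k - y k,
   d k = y k - y (k-1) and p k = s k + d k, the optimality conditions of the two
   ADMM sub-steps give: the monotonicity 2 c0 |d k|^2 <= rho2 <s k, d k> of the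
   strongly convex subdifferential; the nonincrease of
   V k = rho1 |r k|^2 + rho2 |p k|^2, which dominates E k from k = 2 on; and a
   one-step decrease of the Bregman distance to a feasible point, up to the noise
   term rho1 <r k, b^delta - b> and the shifted cross term rho2 <d k, W x k - yh>.
   Before the discrepancy principle stops, the noise term is absorbed by the
   fraction 1/tau of the residual energy, so each step dissipates 2 alpha E k;
   only the stopping step leaves the remainder max(rho1, rho2) tau delta^2.
   Telescoping from m to k_delta, the cross terms are controlled by Young's
   inequality against the telescoped dissipation of V.  The second bound
   telescopes <mu k, y k_delta - yh> + rho2 <d k, W x k_delta - yh>, whose
   increments are residual inner products. *)

From Stdlib Require Import Reals Lra Lia.
Open Scope R_scope.

(** * Inner products *)

Section InnerProduct.
Context {H : Hilbert}.
Implicit Types u v z : H.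

Lemma hinner_0l v : hinner hzero v = 0.
Proof. pose proof (hinner_add_l H hzero hzero v) as E. rewrite hadd_0 in E. lra. Qed.

Lemma hinner_oppl u v : hinner (hopp u) v = - hinner u v.
Proof.
  pose proof (hinner_add_l H u (hopp u) v) as E.
  rewrite hadd_opp, hinner_0l in E. lra.
Qed.

Lemma hinner_add_r u v z : hinner z (hadd u v) = hinner z u + hinner z v.
Proof. rewrite !(hinner_sym H z). apply hinner_add_l. Qed.

Lemma hinner_oppr u v : hinner v (hopp u) = - hinner v u.
Proof. rewrite !(hinner_sym H v). apply hinner_oppl. Qed.

Lemma hinner_scal_r a u v : hinner v (hscal a u) = a * hinner v u.
Proof. rewrite !(hinner_sym H v). apply hinner_scal_l. Qed.

Lemma hnorm_sq v : hnorm v ^ 2 = hinner v v.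
Proof. unfold hnorm. rewrite pow2_sqrt; [reflexivity | apply hinner_pos]. Qed.

Lemma hadd_cancel_r u v z : hadd u z = hadd v z -> u = v.
Proof.
  intro E. assert (E2 : hadd (hadd u z) (hopp z) = hadd (hadd v z) (hopp z)) by (rewrite E; reflexivity).
  rewrite <- !hadd_assoc, hadd_opp, !hadd_0 in E2. exact E2.
Qed.

Lemma hscal_0 v : hscal 0 v = hzero.
Proof.
  apply (hadd_cancel_r _ _ (hscal 0 v)).
  rewrite <- hscal_distr_r, Rplus_0_r, hadd_comm, hadd_0. reflexivity.
Qed.

Lemma hopp_scal v : hopp v = hscal (-1) v.
Proof.
  apply (hadd_cancel_r _ _ v). rewrite (hadd_comm H (hopp v)), hadd_opp.
  rewrite <- (hscal_1 H v) at 2. rewrite <- hscal_distr_r.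
  replace (-1 + 1) with 0 by lra. rewrite hscal_0. reflexivity.
Qed.

End InnerProduct.

(* Expands inner products in the goal by bilinearity, identifies <a, b> with
   <b, a> and calls [lra]; hypotheses must be reverted to be expanded. *)
Ltac inner_lra :=
  unfold hsub;
  repeat rewrite ?hinner_add_l, ?hinner_add_r, ?hinner_scal_l, ?hinner_scal_r,
    ?hinner_oppl, ?hinner_oppr;
  repeat match goal with
  | |- context [@hinner ?h ?a ?b] =>
      tryif constr_eq a b then fail else
        match goal with |- context [@hinner h b a] => rewrite (hinner_sym h a b) end
  end;
  intros; lra.

Lemma inner_young {H : Hilbert} (u v : H) t : 0 < t ->
  2 * Rabs (hinner u v) <= t * hinner u u + / t * hinner v v.
Proof.
  intro Ht.
  assert (Ht' : 0 < / t) by (apply Rinv_0_lt_compat; lra).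
  pose proof (hinner_pos H (hsub (hscal t u) v)) as P1.
  pose proof (hinner_pos H (hadd (hscal t u) v)) as P2.
  assert (Q : 2 * t * Rabs (hinner u v) <= t * t * hinner u u + hinner v v).
  { revert P1 P2. unfold Rabs; destruct Rcase_abs; inner_lra. }
  replace (t * hinner u u + / t * hinner v v)
    with (/ t * (t * t * hinner u u + hinner v v)) by (field; lra).
  replace (2 * Rabs (hinner u v)) with (/ t * (2 * t * Rabs (hinner u v))) by (field; lra).
  apply Rmult_le_compat_l; lra.
Qed.

Lemma inner_add_sq_le {H : Hilbert} (u v : H) :
  hinner (hadd u v) (hadd u v) <= 2 * hinner u u + 2 * hinner v v.
Proof. pose proof (hinner_pos H (hsub u v)) as P. revert P. inner_lra. Qed.

Lemma inner_sub_sq_le {H : Hilbert} (u v : H) :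
  hinner (hsub u v) (hsub u v) <= 2 * hinner u u + 2 * hinner v v.
Proof. pose proof (hinner_pos H (hadd u v)) as P. revert P. inner_lra. Qed.

Notation sqn v := (hinner v v).

Lemma densely_defined_closed_sub {X Y : Hilbert} (DW : X -> Prop) (W : X -> Y) u v :
  densely_defined_closed DW W -> DW u -> DW v ->
  DW (hsub u v) /\ W (hsub u v) = hsub (W u) (W v).
Proof.
  intros (_ & Dadd & Dscal & Wadd & Wscal & _) Hu Hv. unfold hsub. rewrite !hopp_scal.
  split; [apply Dadd, Dscal|rewrite Wadd, Wscal]; auto.
Qed.

Lemma bounded_linear_sub {X Y : Hilbert} (A : X -> Y) u v :
  bounded_linear A -> A (hsub u v) = hsub (A u) (A v).
Proof. intros (Aadd & Ascal & _). unfold hsub. rewrite !hopp_scal, Aadd, Ascal. reflexivity. Qed.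

Lemma linear_coef_ge0 a q : 0 <= q ->
  (forall t, 0 < t <= 1 -> 0 <= t * a + t ^ 2 * q) -> 0 <= a.
Proof.
  intros Hq Ht. destruct (Rle_or_lt 0 a) as [|Ha]; [lra|]. exfalso.
  set (t := Rmin 1 (- a / (q + 1))).
  assert (Ht0 : 0 < t) by (apply Rmin_glb_lt; [lra|apply Rdiv_lt_0_compat; lra]).
  assert (Htq : t * (q + 1) <= - a).
  { apply Rle_trans with (- a / (q + 1) * (q + 1)).
    - apply Rmult_le_compat_r; [lra|apply Rmin_r].
    - right. field. lra. }
  specialize (Ht t (conj Ht0 (Rmin_l _ _))).
  assert (a + t * q < 0) by lra. nra.
Qed.

Lemma linear_coef_eq0 a q : 0 <= q -> (forall t, 0 <= t * a + t ^ 2 * q) -> a = 0.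
Proof.
  intros Hq Ht.
  assert (0 <= a) by (apply (linear_coef_ge0 a q); auto).
  assert (0 <= - a).
  { apply (linear_coef_ge0 (- a) q Hq). intros t _.
    replace (t * - a + t ^ 2 * q) with ((- t) * a + (- t) ^ 2 * q) by ring. apply Ht. }
  lra.
Qed.

Lemma residual_noise_bound {H : Hilbert} (rho1 rho2 tau delta ss : R) (u e : H) :
  0 < rho1 -> 1 < tau -> 0 <= rho2 * ss -> hinner e e <= delta ^ 2 ->
  Rabs (rho1 * hinner u e) <= (rho1 * hinner u u + rho2 * ss) / tau + Rmax rho1 rho2 * tau * delta ^ 2.
Proof.
  intros Hr1 Htau Hss He.
  assert (Hinv : 0 < / tau) by (apply Rinv_0_lt_compat; lra).
  pose proof (inner_young u e (2 / tau) ltac:(apply Rdiv_lt_0_compat; lra)) as Y.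
  replace (/ (2 / tau)) with (tau / 2) in Y by (field; lra).
  rewrite Rabs_mult, (Rabs_right rho1) by lra.
  pose proof (hinner_pos H u). pose proof (hinner_pos H e). pose proof (Rmax_l rho1 rho2).
  assert (rho1 * (tau * hinner e e) <= Rmax rho1 rho2 * (tau * delta ^ 2)).
  { apply Rmult_le_compat; [lra|apply Rmult_le_pos; lra|lra|apply Rmult_le_compat_l; lra]. }
  assert (rho1 * (2 * Rabs (hinner u e)) <= rho1 * (2 / tau * hinner u u + tau / 2 * hinner e e))
    by (apply Rmult_le_compat_l; lra).
  assert (0 <= rho2 * ss * / tau) by (apply Rmult_le_pos; lra).
  assert (0 <= rho1 * (tau * hinner e e)) by (apply Rmult_le_pos; [|apply Rmult_le_pos]; lra).
  unfold Rdiv in *. lra.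
Qed.

Lemma residual_noise_bound_above {H : Hilbert} (rho1 rho2 tau delta ss : R) (u e : H) :
  0 < rho1 -> 0 < rho2 -> 1 < tau -> 0 <= ss -> hinner e e <= delta ^ 2 ->
  Rmax (rho1 ^ 2) (rho2 ^ 2) * tau ^ 2 * delta ^ 2 < rho1 ^ 2 * hinner u u + rho2 ^ 2 * ss ->
  Rabs (rho1 * hinner u e) <= (rho1 * hinner u u + rho2 * ss) / tau.
Proof.
  intros Hr1 Hr2 Htau Hss He Habove.
  set (M := Rmax rho1 rho2). set (G := rho1 * hinner u u + rho2 * ss).
  pose proof (hinner_pos H u) as Hu. pose proof (hinner_pos H e) as He0.
  assert (HM1 : rho1 <= M) by apply Rmax_l. assert (HM2 : rho2 <= M) by apply Rmax_r.
  assert (HMsq : M ^ 2 <= Rmax (rho1 ^ 2) (rho2 ^ 2)).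
  { unfold M. apply Rmax_case; [apply Rmax_l|apply Rmax_r]. }
  assert (HG : rho1 ^ 2 * hinner u u + rho2 ^ 2 * ss <= M * G).
  { assert (0 <= (M - rho1) * (rho1 * hinner u u)) by (apply Rmult_le_pos; nra).
    assert (0 <= (M - rho2) * (rho2 * ss)) by (apply Rmult_le_pos; nra).
    unfold G. nra. }
  assert (HMG : M * tau ^ 2 * delta ^ 2 <= G).
  { apply (Rmult_le_reg_l M); [lra|].
    assert (0 <= tau ^ 2 * delta ^ 2) by nra. nra. }
  pose proof (inner_young u e (/ tau) ltac:(apply Rinv_0_lt_compat; lra)) as Y.
  rewrite Rinv_inv in Y.
  rewrite Rabs_mult, (Rabs_right rho1) by lra.
  assert (rho1 * (tau * (2 * Rabs (hinner u e))) <= rho1 * (hinner u u + tau ^ 2 * hinner e e)).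
  { apply Rmult_le_compat_l; [lra|].
    replace (hinner u u + tau ^ 2 * hinner e e) with (tau * (/ tau * hinner u u + tau * hinner e e))
      by (field; lra).
    apply Rmult_le_compat_l; lra. }
  assert (rho1 * (tau ^ 2 * hinner e e) <= M * (tau ^ 2 * delta ^ 2)).
  { apply Rmult_le_compat; [lra|apply Rmult_le_pos; nra|lra|apply Rmult_le_compat_l; nra]. }
  assert (tau * (rho1 * Rabs (hinner u e)) <= G) by (unfold G in *; nra).
  apply (Rmult_le_reg_l tau); [lra|].
  replace (tau * (G / tau)) with G by (field; lra). assumption.
Qed.

(** * Finite sums *)

(* [rsum g a n] is the sum of [g k] over [a <= k < a + n]. *)
Fixpoint rsum (g : nat -> R) (a n : nat) : R :=
  match n with
  | O => 0
  | S n' => rsum g a n' + g (a + n')%nat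
  end.

Lemma rsum_le g h a n : (forall k, (a <= k < a + n)%nat -> g k <= h k) ->
  rsum g a n <= rsum h a n.
Proof.
  induction n as [|n IH]; intro Hle; simpl; [lra|].
  assert (g (a + n)%nat <= h (a + n)%nat) by (apply Hle; lia).
  assert (rsum g a n <= rsum h a n) by (apply IH; intros; apply Hle; lia).
  lra.
Qed.

Lemma rsum_ext g h a n : (forall k, g k = h k) -> rsum g a n = rsum h a n.
Proof. intro Hgh. induction n as [|n IH]; simpl; [reflexivity|rewrite IH, Hgh; reflexivity]. Qed.

Lemma rsum_add g h a n : rsum (fun k => g k + h k) a n = rsum g a n + rsum h a n.
Proof. induction n as [|n IH]; simpl; lra. Qed.

Lemma rsum_scal c g a n : rsum (fun k => c * g k) a n = c * rsum g a n.
Proof. induction n as [|n IH]; simpl; [ring|rewrite IH; ring]. Qed.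

Lemma rsum_const c a n : rsum (fun _ => c) a n = INR n * c.
Proof. induction n as [|n IH]; simpl rsum; [simpl; ring|rewrite IH, S_INR; ring]. Qed.

Lemma rsum_shift g a n : rsum (fun k => g (S k)) a n = rsum g (S a) n.
Proof. induction n as [|n IH]; simpl; [reflexivity|rewrite IH; reflexivity]. Qed.

Lemma rsum_cons g a n : rsum g a (S n) = g a + rsum g (S a) n.
Proof.
  induction n as [|n IH]; [simpl; rewrite Nat.add_0_r; ring|].
  change (rsum g a (S (S n))) with (rsum g a (S n) + g (a + S n)%nat).
  rewrite IH. simpl. replace (a + S n)%nat with (S (a + n)) by lia. ring.
Qed.

Lemma rsum_nonneg g a n : (forall k, 0 <= g k) -> 0 <= rsum g a n.
Proof.
  intro Hg. rewrite <- (Rmult_0_r (INR n)), <- (rsum_const 0 a).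
  apply rsum_le. intros. apply Hg.
Qed.

Lemma rsum_zero a n : rsum (fun _ => 0) a n = 0.
Proof. rewrite rsum_const. ring. Qed.

Lemma telescope_le (u g h : nat -> R) a n :
  (forall k, (a <= k < a + n)%nat -> u (S k) + g k <= u k + h k) ->
  u (a + n)%nat + rsum g a n <= u a + rsum h a n.
Proof.
  induction n as [|n IH]; intro Hstep; simpl; [rewrite Nat.add_0_r; lra|].
  replace (a + S n)%nat with (S (a + n)) by lia.
  assert (u (S (a + n)) + g (a + n)%nat <= u (a + n)%nat + h (a + n)%nat) by (apply Hstep; lia).
  assert (u (a + n)%nat + rsum g a n <= u a + rsum h a n) by (apply IH; intros; apply Hstep; lia).
  lra.
Qed.

Lemma telescope_Rabs (u : nat -> R) a n :
  Rabs (u (a + n)%nat - u a) <= rsum (fun k => Rabs (u (S k) - u k)) a n.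
Proof.
  set (jumps := rsum (fun k => Rabs (u (S k) - u k)) a n).
  apply Rabs_le. split.
  - enough (- u (a + n)%nat + rsum (fun _ => 0) a n <= - u a + jumps) by (rewrite rsum_zero in *; lra).
    apply (telescope_le (fun k => - u k)). intros k _.
    pose proof (Rle_abs (- (u (S k) - u k))). rewrite Rabs_Ropp in *. lra.
  - enough (u (a + n)%nat + rsum (fun _ => 0) a n <= u a + jumps) by (rewrite rsum_zero in *; lra).
    apply telescope_le. intros k _. pose proof (Rle_abs (u (S k) - u k)). lra.
Qed.

Lemma sum_f_R0_rsum g a n : sum_f_R0 (fun i => g (a + i)%nat) n = rsum g a (S n).
Proof. induction n as [|n IH]; simpl; [lra|rewrite IH; reflexivity]. Qed.

(** * The constants *)

Definition theta (tau : R) : R := 1 - / tau.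
Definition alpha (rho2 tau c0 : R) : R := Rmin (theta tau / 2) (c0 / (2 * rho2)).
Definition kappa (rho2 c0 : R) : R := 1 + rho2 / (4 * c0).
Definition Cbreg (rho2 tau c0 : R) : R :=
  9 / 2 * kappa rho2 c0 + 3 / 2 + (11 + 3 * kappa rho2 c0) / alpha rho2 tau c0.
Definition Cfinal (rho2 tau c0 : R) : R := Cbreg rho2 tau c0 + rho2 + 3.

Section Constants.
Variables (rho2 tau c0 : R).
Hypotheses (Hrho2 : 0 < rho2) (Htau : 1 < tau) (Hc0 : 0 < c0).

Lemma theta_pos : 0 < theta tau.
Proof.
  unfold theta. assert (/ tau < / 1) by (apply Rinv_lt_contravar; lra).
  rewrite Rinv_1 in *. lra.
Qed.

Lemma div_tau_le g : 0 <= g -> g / tau <= g.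
Proof.
  intro Hg. assert (0 <= g * theta tau) by (apply Rmult_le_pos; [lra|apply Rlt_le, theta_pos]).
  unfold theta, Rdiv in *. lra.
Qed.

Lemma alpha_pos : 0 < alpha rho2 tau c0.
Proof.
  pose proof theta_pos. apply Rmin_glb_lt; [lra|apply Rdiv_lt_0_compat; lra].
Qed.

Lemma alpha_le_theta : 2 * alpha rho2 tau c0 <= theta tau.
Proof. pose proof (Rmin_l (theta tau / 2) (c0 / (2 * rho2))). unfold alpha. lra. Qed.

Lemma alpha_rho2_le : 2 * alpha rho2 tau c0 * rho2 <= c0.
Proof.
  pose proof (Rmin_r (theta tau / 2) (c0 / (2 * rho2))) as Hr. fold (alpha rho2 tau c0) in Hr.
  apply (Rmult_le_compat_r (2 * rho2)) in Hr; [|lra].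
  replace (c0 / (2 * rho2) * (2 * rho2)) with c0 in Hr by (field; lra). lra.
Qed.

Lemma kappa_ge1 : 1 <= kappa rho2 c0.
Proof. unfold kappa. assert (0 < rho2 / (4 * c0)) by (apply Rdiv_lt_0_compat; lra). lra. Qed.

Lemma Cbreg_pos : 0 < Cbreg rho2 tau c0.
Proof.
  pose proof kappa_ge1. pose proof alpha_pos.
  assert (0 < (11 + 3 * kappa rho2 c0) / alpha rho2 tau c0) by (apply Rdiv_lt_0_compat; lra).
  unfold Cbreg. lra.
Qed.

Lemma Cfinal_pos : 0 < Cfinal rho2 tau c0.
Proof. pose proof Cbreg_pos. unfold Cfinal. lra. Qed.

Lemma Cfinal_ge : Cbreg rho2 tau c0 <= Cfinal rho2 tau c0 /\ rho2 <= Cfinal rho2 tau c0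
                  /\ 3 <= Cfinal rho2 tau c0.
Proof. pose proof Cbreg_pos. unfold Cfinal. lra. Qed.

End Constants.

(** * The noisy ADMM iteration *)

Section ADMM.
Context {X Y H : Hilbert}.
Variables (A : X -> H) (DW : X -> Prop) (W : X -> Y) (f : Y -> ereal).
Variables (rho1 rho2 c0 : R) (bd : H).
Variables (x : nat -> X) (y : nat -> Y) (lam : nat -> H) (mu : nat -> Y).
Hypotheses (HA : bounded_linear A) (HW : densely_defined_closed DW W).
Hypotheses (Hf : proper f) (Hfc : strongly_convex f c0).
Hypothesis Hadm : admm A DW W f rho1 rho2 bd x y lam mu.
Hypotheses (Hrho1 : 0 < rho1) (Hrho2 : 0 < rho2) (Hc0 : 0 < c0).

Local Notation r k := (hsub (A (x k)) bd).
Local Notation s k := (hsub (W (x k)) (y k)).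
Local Notation d k := (hsub (y k) (y (k - 1)%nat)).
(* [p k = s k + d k] is the residual of the x-step against the previous y. *)
Local Notation p k := (hsub (W (x k)) (y (k - 1)%nat)).
Local Notation G k := (rho1 * sqn (r k) + rho2 * sqn (s k)).
Local Notation E k := (G k + rho2 * sqn (d k)).
Local Notation V k := (rho1 * sqn (r k) + rho2 * sqn (p k)).
Local Notation Q k := (rho2 * (sqn (hsub (p (S k)) (p k)) + sqn (d k))).

Lemma Ek_expand k : Ek A W rho1 rho2 bd x y k = E k.
Proof. unfold Ek. rewrite !hnorm_sq. reflexivity. Qed.

Lemma E_nonneg k : 0 <= E k.
Proof.
  pose proof (hinner_pos _ (r k)). pose proof (hinner_pos _ (s k)). pose proof (hinner_pos _ (d k)).
  nra.
Qed.

Lemma V_nonneg k : 0 <= V k.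
Proof. pose proof (hinner_pos _ (r k)). pose proof (hinner_pos _ (p k)). nra. Qed.

Lemma x_in_dom k : (1 <= k)%nat -> DW (x k).
Proof. intro Hk. destruct k as [|k]; [lia|]. exact (proj1 (proj1 (Hadm k))). Qed.

(* Optimality of the x-step, rewritten with the updated multipliers. *)
Lemma x_step_optimality k z : DW z ->
  hinner (lam (S k)) (A z) + hinner (mu (S k)) (W z) + rho2 * hinner (d (S k)) (W z) = 0.
Proof.
  intro Hz.
  destruct (Hadm k) as [[Hx Hmin] [_ [Hlam Hmu]]].
  pose proof HA as (Aadd & Ascal & _).
  pose proof HW as (_ & Dadd & Dscal & Wadd & Wscal & _).
  assert (Hfoc : hinner (lam k) (A z) + hinner (mu k) (W z) + rho1 * hinner (r (S k)) (A z)
                 + rho2 * hinner (hsub (W (x (S k))) (y k)) (W z) = 0).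
  { apply (linear_coef_eq0 _ (rho1 / 2 * sqn (A z) + rho2 / 2 * sqn (W z))).
    - pose proof (hinner_pos _ (A z)). pose proof (hinner_pos _ (W z)). nra.
    - intro t. specialize (Hmin (hadd (x (S k)) (hscal t z)) (Dadd _ _ Hx (Dscal _ _ Hz))).
      rewrite Aadd, Ascal, Wadd, Wscal, !hnorm_sq in Hmin by auto.
      revert Hmin. inner_lra. }
  rewrite Hlam, Hmu. replace (S k - 1)%nat with k by lia. revert Hfoc. inner_lra.
Qed.

(* [mu k] is a subgradient of [f] at [y k], with the strong-convexity gain. *)
Lemma y_step_subgradient k : (1 <= k)%nat ->
  f (y k) = Fin (fval (f (y k))) /\
  forall z b, f z = Fin b ->
    fval (f (y k)) + hinner (mu k) (hsub z (y k)) + c0 * sqn (hsub z (y k)) <= b.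
Proof.
  intro Hk. destruct k as [|k]; [lia|]. clear Hk.
  destruct (Hadm k) as [_ [Hy [_ Hmu]]].
  destruct Hf as [z0 Hz0]. unfold in_dom in Hz0.
  destruct (f z0) as [b0|] eqn:Ez0; [|contradiction].
  pose proof (Hy z0) as Hy0. rewrite Ez0 in Hy0.
  destruct (f (y (S k))) as [a|] eqn:Ey; [|contradiction].
  split; [reflexivity|]. cbn [fval]. intros z b Hzb. rewrite Hmu.
  pose proof (hinner_pos _ (hsub z (y (S k)))).
  match goal with |- ?lhs <= ?rhs => enough (0 <= rhs - lhs) by lra end.
  apply (linear_coef_ge0 _ ((c0 + rho2 / 2) * sqn (hsub z (y (S k)))));
    [apply Rmult_le_pos; lra|].
  intros t Ht.
  destruct (Hfc z (y (S k)) t b a ltac:(lra) Hzb Ey) as [v [Ev Hv]].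
  specialize (Hy (hadd (hscal t z) (hscal (1 - t) (y (S k))))).
  rewrite Ev in Hy. cbn [ele eplus] in Hy. rewrite !hnorm_sq in Hy. rewrite hnorm_sq in Hv.
  clear Hy0. revert Hy Hv. inner_lra.
Qed.

Lemma multiplier_increment k z : (1 <= k)%nat -> DW z ->
  rho1 * hinner (r (S k)) (A z) + rho2 * hinner (p (S k)) (W z) = rho2 * hinner (d k) (W z).
Proof.
  intros Hk Hz. destruct k as [|j]; [lia|].
  pose proof (x_step_optimality (S j) z Hz) as O2. pose proof (x_step_optimality j z Hz) as O1.
  destruct (Hadm (S j)) as [_ [_ [Hlam Hmu]]]. rewrite Hlam, Hmu in O2.
  replace (S (S j) - 1)%nat with (S j) in * by lia. replace (S j - 1)%nat with j in * by lia.
  revert O1 O2. inner_lra.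
Qed.

(* Monotonicity of the strongly convex subdifferential, with
   [mu (S k) - mu k = rho2 * s (S k)]. *)
Lemma d_s_monotone k : (2 <= k)%nat -> 2 * c0 * sqn (d k) <= rho2 * hinner (s k) (d k).
Proof.
  intro Hk. destruct k as [|[|j]]; try lia.
  destruct (y_step_subgradient (S (S j)) ltac:(lia)) as [E2 S2].
  destruct (y_step_subgradient (S j) ltac:(lia)) as [E1 S1].
  specialize (S2 _ _ E1). specialize (S1 _ _ E2).
  destruct (Hadm (S j)) as [_ [_ [_ Hmu]]]. rewrite Hmu in S2.
  replace (S (S j) - 1)%nat with (S j) by lia.
  revert S1 S2. inner_lra.
Qed.

Lemma V_step k : (1 <= k)%nat ->
  V (S k) + rho2 * sqn (hsub (p (S k)) (p k)) + 2 * rho2 * hinner (d k) (s k) <= V k.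
Proof.
  intro Hk.
  destruct (densely_defined_closed_sub DW W (x (S k)) (x k) HW (x_in_dom (S k) ltac:(lia)) (x_in_dom k Hk))
    as [Hdom HWsub].
  pose proof (multiplier_increment k _ Hk Hdom) as Hinc.
  rewrite HWsub, (bounded_linear_sub A _ _ HA) in Hinc.
  assert (Hr : 0 <= rho1 * sqn (hsub (r (S k)) (r k))) by (apply Rmult_le_pos; [lra|apply hinner_pos]).
  replace (S k - 1)%nat with k in * by lia.
  revert Hinc Hr. inner_lra.
Qed.

Lemma V_decrease k : (2 <= k)%nat ->
  V (S k) + rho2 * sqn (hsub (p (S k)) (p k)) + 4 * c0 * sqn (d k) <= V k.
Proof.
  intro Hk. pose proof (V_step k ltac:(lia)). pose proof (d_s_monotone k Hk).
  rewrite (hinner_sym _ (d k) (s k)) in *. lra.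
Qed.

Lemma V_le_2E k : V k <= 2 * E k.
Proof.
  assert (Hp : sqn (p k) <= 2 * sqn (s k) + 2 * sqn (d k)).
  { pose proof (hinner_pos _ (hsub (s k) (d k))) as P. revert P. inner_lra. }
  pose proof (hinner_pos _ (r k)). nra.
Qed.

Lemma E_le_V k : (2 <= k)%nat -> E k <= V k.
Proof.
  intro Hk. pose proof (d_s_monotone k Hk). pose proof (hinner_pos _ (d k)).
  assert (Hsd : 0 <= hinner (s k) (d k)) by nra.
  assert (Hp : sqn (s k) + sqn (d k) <= sqn (p k)) by (revert Hsd; inner_lra).
  nra.
Qed.

Lemma V_succ_le_3E k : (1 <= k)%nat -> V (S k) <= 3 * E k.
Proof.
  intro Hk. pose proof (V_step k Hk). pose proof (V_le_2E k).
  pose proof (inner_young (d k) (s k) 1 ltac:(lra)) as Hy. rewrite Rinv_1 in Hy.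
  pose proof (Rle_abs (- hinner (d k) (s k))). rewrite Rabs_Ropp in *.
  pose proof (hinner_pos _ (hsub (p (S k)) (p k))). pose proof (hinner_pos _ (r k)).
  nra.
Qed.

Lemma V_antitone j k : (2 <= j <= k)%nat -> V k <= V j.
Proof.
  intro Hjk.
  pose proof (telescope_le (fun i => V i) (fun _ => 0) (fun _ => 0) j (k - j)) as T.
  rewrite rsum_zero in T. replace (j + (k - j))%nat with k in T by lia.
  enough (V k + 0 <= V j + 0) by lra. apply T.
  intros i Hi. pose proof (V_decrease i ltac:(lia)).
  pose proof (hinner_pos _ (hsub (p (S i)) (p i))). pose proof (hinner_pos _ (d i)). nra.
Qed.

Lemma Q_sum_le_V a n : (2 <= a)%nat -> rsum (fun k => Q k) a n <= kappa rho2 c0 * V a.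
Proof.
  intro Ha.
  set (dissip := fun k => rho2 * sqn (hsub (p (S k)) (p k)) + 4 * c0 * sqn (d k)).
  assert (Hsum : V (a + n)%nat + rsum dissip a n <= V a + 0).
  { rewrite <- (rsum_zero a n). apply (telescope_le (fun k => V k)).
    intros k Hk. pose proof (V_decrease k ltac:(lia)). unfold dissip. lra. }
  pose proof (V_nonneg (a + n)).
  apply Rle_trans with (rsum (fun k => kappa rho2 c0 * dissip k) a n).
  - apply rsum_le. intros k _. unfold dissip, kappa.
    pose proof (hinner_pos _ (hsub (p (S k)) (p k))). pose proof (hinner_pos _ (d k)).
    assert (0 <= rho2 / (4 * c0) * (rho2 * sqn (hsub (p (S k)) (p k))))
      by (apply Rmult_le_pos; [apply Rlt_le, Rdiv_lt_0_compat|]; nra).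
    replace ((1 + rho2 / (4 * c0)) * (rho2 * sqn (hsub (p (S k)) (p k)) + 4 * c0 * sqn (d k)))
      with (rho2 * sqn (hsub (p (S k)) (p k)) + 4 * c0 * sqn (d k)
            + rho2 / (4 * c0) * (rho2 * sqn (hsub (p (S k)) (p k))) + rho2 * sqn (d k))
      by (field; lra).
    nra.
  - rewrite rsum_scal. apply Rmult_le_compat_l; [pose proof (kappa_ge1 rho2 c0 Hrho2 Hc0); lra|lra].
Qed.

Lemma Q_le_11E k : (1 <= k)%nat -> Q k <= 11 * E k.
Proof.
  intro Hk.
  pose proof (inner_sub_sq_le (p (S k)) (p k)).
  pose proof (V_succ_le_3E k Hk). pose proof (V_le_2E k).
  pose proof (hinner_pos _ (r k)). pose proof (hinner_pos _ (r (S k))). pose proof (hinner_pos _ (s k)).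
  nra.
Qed.

Section FeasiblePoint.
Variables (b : H) (xh : X) (yh : Y).
Hypotheses (Hxh : DW xh) (HAxh : A xh = b) (HWxh : W xh = yh).

Local Notation e := (hsub bd b).
Local Notation w k := (hsub (W (x k)) yh).

Lemma feasible_diff k : (1 <= k)%nat ->
  DW (hsub (x k) xh) /\ W (hsub (x k) xh) = w k /\ A (hsub (x k) xh) = hsub (A (x k)) b.
Proof.
  intro Hk. destruct (densely_defined_closed_sub DW W (x k) xh HW (x_in_dom k Hk) Hxh) as [Hdom HWsub].
  rewrite HWsub, HWxh, (bounded_linear_sub A _ _ HA), HAxh. auto.
Qed.

Lemma bregman_descent k : (1 <= k)%nat ->
  bregman f (mu (S k)) yh (y (S k)) + rho2 * hinner (d (S k)) (w (S k))
  <= bregman f (mu k) yh (y k) - c0 * sqn (d (S k)) - G (S k) - rho1 * hinner (r (S k)) e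
     + rho2 * hinner (d k) (w (S k)).
Proof.
  intro Hk.
  destruct (y_step_subgradient k Hk) as [_ Hsub].
  destruct (y_step_subgradient (S k) ltac:(lia)) as [Hfin _].
  specialize (Hsub _ _ Hfin).
  destruct (feasible_diff (S k) ltac:(lia)) as (Hdom & HWd & HAd).
  pose proof (multiplier_increment k _ Hk Hdom) as Hinc. rewrite HWd, HAd in Hinc.
  destruct (Hadm k) as [_ [_ [_ Hmu]]]. unfold bregman. rewrite Hmu.
  replace (S k - 1)%nat with k in * by lia.
  revert Hsub Hinc. inner_lra.
Qed.

Lemma cross_shift_bound k :
  hinner (d k) (w (S k)) - hinner (d k) (w k)
  <= 3 / 2 * sqn (d k) + sqn (hsub (p (S k)) (p k)) / 2.
Proof.
  pose proof (inner_young (d k) (hsub (p (S k)) (p k)) 1 ltac:(lra)) as Hy. rewrite Rinv_1 in Hy.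
  pose proof (Rle_abs (hinner (d k) (hsub (p (S k)) (p k)))) as Habs.
  replace (S k - 1)%nat with k in * by lia.
  revert Hy Habs. inner_lra.
Qed.

Lemma multiplier_gap_increment n k : (1 <= k)%nat -> (1 <= n)%nat ->
  hinner (mu (S k)) (hsub (y n) yh) + rho2 * hinner (d (S k)) (w n)
  - (hinner (mu k) (hsub (y n) yh) + rho2 * hinner (d k) (w n))
  = - rho1 * hinner (r (S k)) (r n) - rho1 * hinner (r (S k)) e - rho2 * hinner (s (S k)) (s n).
Proof.
  intros Hk Hn.
  destruct (feasible_diff n Hn) as (Hdom & HWd & HAd).
  pose proof (multiplier_increment k _ Hk Hdom) as Hinc. rewrite HWd, HAd in Hinc.
  destruct (Hadm k) as [_ [_ [_ Hmu]]]. rewrite Hmu.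
  replace (S k - 1)%nat with k in * by lia.
  revert Hinc. inner_lra.
Qed.

Lemma W_xh_sub_sq k : (1 <= k)%nat -> hnorm (W (hsub xh (x k))) ^ 2 = sqn (w k).
Proof.
  intro Hk. destruct (densely_defined_closed_sub DW W xh (x k) HW Hxh (x_in_dom k Hk)) as [_ HWsub].
  rewrite hnorm_sq, HWsub, HWxh. inner_lra.
Qed.

Lemma W_sub_xh_sq k : (1 <= k)%nat -> hnorm (W (hsub (x k) xh)) ^ 2 = sqn (w k).
Proof. intro Hk. destruct (feasible_diff k Hk) as (_ & HWd & _). rewrite hnorm_sq, HWd. reflexivity. Qed.

Lemma cross_term_eq k : (1 <= k)%nat ->
  hinner (hsub (y (k - 1)%nat) (y k)) (W (hsub xh (x (k + 1)%nat))) = hinner (d k) (w (S k)).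
Proof.
  intro Hk. replace (k + 1)%nat with (S k) by lia.
  destruct (densely_defined_closed_sub DW W xh (x (S k)) HW Hxh (x_in_dom (S k) ltac:(lia))) as [_ HWsub].
  rewrite HWsub, HWxh. inner_lra.
Qed.

(** * Up to the discrepancy stopping index *)

Section StoppingIndex.
Variables (tau delta : R) (n m : nat).
Hypotheses (Htau : 1 < tau) (Hnoise : hnorm (hsub bd b) <= delta).
Hypothesis Hbefore_stop :
  forall k, (1 <= k)%nat -> (k < n)%nat -> ~ stop_cond A W rho1 rho2 tau delta bd x y k.
Hypotheses (Hm : (1 <= m)%nat) (Hmn : (m + 1 < n)%nat).

Local Notation al := (alpha rho2 tau c0).
Local Notation M := (Rmax rho1 rho2).
Local Notation T k := (bregman f (mu k) yh (y k) + rho2 * hinner (d k) (w k)).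

Lemma noise_sq_le : sqn e <= delta ^ 2.
Proof.
  rewrite <- hnorm_sq. assert (0 <= hnorm e) by apply sqrt_pos.
  apply pow_incr. lra.
Qed.

Lemma noise_before_stop k : (1 <= k)%nat -> (k < n)%nat ->
  Rabs (rho1 * hinner (r k) e) <= G k / tau.
Proof.
  intros Hk1 Hk2. pose proof (Hbefore_stop k Hk1 Hk2) as Habove. unfold stop_cond in Habove.
  apply Rnot_le_lt in Habove. rewrite !hnorm_sq in Habove.
  exact (residual_noise_bound_above _ _ _ _ _ _ _ Hrho1 Hrho2 Htau (hinner_pos _ _) noise_sq_le Habove).
Qed.

Lemma noise_any k : Rabs (rho1 * hinner (r k) e) <= G k / tau + M * tau * delta ^ 2.
Proof.
  apply residual_noise_bound; auto using noise_sq_le.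
  apply Rmult_le_pos; [lra|apply hinner_pos].
Qed.

(* Absorbing [G k / tau] of the noise leaves the fraction [theta tau] of [G k],
   which together with [c0 |d k|^2] dominates [2 alpha E k]. *)
Lemma dissipation k beta : Rabs (rho1 * hinner (r k) e) <= G k / tau + beta ->
  2 * al * E k <= c0 * sqn (d k) + G k + rho1 * hinner (r k) e + beta.
Proof.
  intro Hnoise_k.
  pose proof (Rle_abs (- (rho1 * hinner (r k) e))) as Habs. rewrite Rabs_Ropp in Habs.
  pose proof (hinner_pos _ (r k)). pose proof (hinner_pos _ (s k)). pose proof (hinner_pos _ (d k)).
  assert (HG : 0 <= G k) by nra.
  assert (2 * al * G k <= theta tau * G k)
    by (apply Rmult_le_compat_r; [lra|apply alpha_le_theta; lra]).
  assert (2 * al * rho2 * sqn (d k) <= c0 * sqn (d k))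
    by (apply Rmult_le_compat_r; [lra|apply alpha_rho2_le; lra]).
  unfold theta, Rdiv in *. lra.
Qed.

Lemma T_step k beta : (1 <= k)%nat ->
  2 * al * E (S k) <= c0 * sqn (d (S k)) + G (S k) + rho1 * hinner (r (S k)) e + beta ->
  T (S k) + 2 * al * E (S k) <= T k + 3 / 2 * Q k + beta.
Proof.
  intros Hk Hdis.
  pose proof (bregman_descent k Hk).
  assert (rho2 * (hinner (d k) (w (S k)) - hinner (d k) (w k))
          <= rho2 * (3 / 2 * sqn (d k) + sqn (hsub (p (S k)) (p k)) / 2))
    by (apply Rmult_le_compat_l; [lra|apply cross_shift_bound]).
  pose proof (hinner_pos _ (hsub (p (S k)) (p k))).
  assert (0 <= rho2 * sqn (hsub (p (S k)) (p k))) by (apply Rmult_le_pos; lra).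
  lra.
Qed.

Lemma T_descent :
  T n + 2 * al * rsum (fun k => E (S k)) m (n - m)
  <= bregman f (mu m) yh (y m) + rho2 * hinner (d m) (w (S m))
     + 3 / 2 * rsum (fun k => Q k) (S m) (n - m - 1) + M * tau * delta ^ 2.
Proof.
  set (L := (n - m - 2)%nat).
  assert (Hn : n = S (S m + L)) by (unfold L; lia).
  assert (Hfirst : T (S m) + 2 * al * E (S m)
                   <= bregman f (mu m) yh (y m) + rho2 * hinner (d m) (w (S m))).
  { pose proof (bregman_descent m Hm).
    pose proof (dissipation (S m) 0 ltac:(rewrite Rplus_0_r; apply noise_before_stop; lia)).
    lra. }
  assert (Hmiddle : T (S m + L)%nat + rsum (fun k => 2 * al * E (S k)) (S m) L
                    <= T (S m) + rsum (fun k => 3 / 2 * Q k) (S m) L).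
  { apply (telescope_le (fun k => T k)). intros k Hk.
    pose proof (T_step k 0 ltac:(lia)
      (dissipation (S k) 0 ltac:(rewrite Rplus_0_r; apply noise_before_stop; lia))).
    lra. }
  assert (Hlast : T n + 2 * al * E n
                  <= T (S m + L)%nat + 3 / 2 * Q (S m + L)%nat + M * tau * delta ^ 2).
  { rewrite Hn. apply T_step; [lia|]. apply dissipation, noise_any. }
  rewrite (rsum_scal (2 * al)), (rsum_scal (3 / 2)) in Hmiddle.
  replace (n - m - 1)%nat with (S L) by lia. replace (n - m)%nat with (S (S L)) by lia.
  rewrite rsum_cons. cbn [rsum]. rewrite <- Hn in Hlast |- *.
  lra.
Qed.

Lemma E_stop_le_V k : (2 <= k <= n)%nat -> E n <= V k.
Proof. intro Hk. pose proof (E_le_V n ltac:(lia)). pose proof (V_antitone k n Hk). lra. Qed.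

(* [w (S k) - w k = p (S k) - p k + d k], and [rho2 |d n|^2] is charged to
   [E (S k)] because [V] is nonincreasing. *)
Lemma cross_increment_bound k : (m <= k < n)%nat ->
  rho2 * Rabs (hinner (d n) (w (S k)) - hinner (d n) (w k)) <= al * E (S k) + / al * Q k.
Proof.
  intro Hk. pose proof (alpha_pos rho2 tau c0 Hrho2 Htau Hc0) as Hal.
  assert (Hdiff : hinner (d n) (w (S k)) - hinner (d n) (w k)
                  = hinner (d n) (hadd (hsub (p (S k)) (p k)) (d k)))
    by (replace (S k - 1)%nat with k by lia; inner_lra).
  rewrite Hdiff.
  pose proof (inner_young (d n) (hadd (hsub (p (S k)) (p k)) (d k)) al Hal) as Hy.
  pose proof (inner_add_sq_le (hsub (p (S k)) (p k)) (d k)) as Hsq.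
  pose proof (E_stop_le_V (S k) ltac:(lia)). pose proof (V_le_2E (S k)).
  pose proof (hinner_pos _ (r n)). pose proof (hinner_pos _ (s n)).
  assert (Hinv : 0 < / al) by (apply Rinv_0_lt_compat; lra).
  assert (/ al * sqn (hadd (hsub (p (S k)) (p k)) (d k))
          <= / al * (2 * sqn (hsub (p (S k)) (p k)) + 2 * sqn (d k)))
    by (apply Rmult_le_compat_l; lra).
  assert (al * (rho2 * sqn (d n)) <= al * (2 * E (S k))) by (apply Rmult_le_compat_l; nra).
  assert (rho2 * (2 * Rabs (hinner (d n) (hadd (hsub (p (S k)) (p k)) (d k))))
          <= rho2 * (al * sqn (d n) + / al * sqn (hadd (hsub (p (S k)) (p k)) (d k))))
    by (apply Rmult_le_compat_l; lra).
  nra.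
Qed.

Lemma cross_term_bound :
  - (rho2 * hinner (d n) (w n))
  <= rho2 / 2 * (sqn (d n) + sqn (w m))
     + al * rsum (fun k => E (S k)) m (n - m) + / al * rsum (fun k => Q k) m (n - m).
Proof.
  set (a := fun j => hinner (d n) (w j)).
  pose proof (telescope_Rabs a m (n - m)) as Htel.
  replace (m + (n - m))%nat with n in Htel by lia.
  assert (Hsum : rho2 * rsum (fun k => Rabs (a (S k) - a k)) m (n - m)
                 <= rsum (fun k => al * E (S k) + / al * Q k) m (n - m)).
  { rewrite <- rsum_scal. apply rsum_le. intros k Hk. apply cross_increment_bound. lia. }
  rewrite rsum_add, (rsum_scal al), (rsum_scal (/ al)) in Hsum.
  pose proof (inner_young (d n) (w m) 1 ltac:(lra)) as Hy. rewrite Rinv_1 in Hy.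
  pose proof (Rle_abs (- a n)). rewrite Rabs_Ropp in *.
  assert (rho2 * Rabs (a n - a m) <= rho2 * rsum (fun k => Rabs (a (S k) - a k)) m (n - m))
    by (apply Rmult_le_compat_l; lra).
  assert (rho2 * (2 * Rabs (a m)) <= rho2 * (1 * sqn (d n) + 1 * sqn (w m)))
    by (apply Rmult_le_compat_l; [lra|exact Hy]).
  assert (Rabs (a n) <= Rabs (a m) + Rabs (a n - a m)).
  { replace (a n) with (a m + (a n - a m)) at 1 by ring. apply Rabs_triang. }
  assert (rho2 * (- a n) <= rho2 * (Rabs (a m) + Rabs (a n - a m)))
    by (apply Rmult_le_compat_l; lra).
  unfold a in *. lra.
Qed.

Lemma Q_tail_bound : rsum (fun k => Q k) (S m) (n - m - 1) <= 3 * kappa rho2 c0 * E m.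
Proof.
  pose proof (Q_sum_le_V (S m) (n - m - 1) ltac:(lia)).
  pose proof (V_succ_le_3E m Hm). pose proof (kappa_ge1 rho2 c0 Hrho2 Hc0).
  assert (kappa rho2 c0 * V (S m) <= kappa rho2 c0 * (3 * E m))
    by (apply Rmult_le_compat_l; lra).
  lra.
Qed.

Lemma Q_window_bound : rsum (fun k => Q k) m (n - m) <= (11 + 3 * kappa rho2 c0) * E m.
Proof.
  replace (n - m)%nat with (S (n - m - 1)) by lia. rewrite rsum_cons.
  pose proof Q_tail_bound. pose proof (Q_le_11E m Hm). lra.
Qed.

Lemma bregman_estimate :
  bregman f (mu n) yh (y n) + al * E n
  <= bregman f (mu m) yh (y m) + M * tau * delta ^ 2 + Cbreg rho2 tau c0 * E m
     + rho2 / 2 * sqn (w m) + rho2 * hinner (d m) (w (S m)).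
Proof.
  pose proof (alpha_pos rho2 tau c0 Hrho2 Htau Hc0) as Hal.
  pose proof T_descent. pose proof cross_term_bound. pose proof Q_tail_bound.
  assert (/ al * rsum (fun k => Q k) m (n - m) <= / al * ((11 + 3 * kappa rho2 c0) * E m))
    by (apply Rmult_le_compat_l; [apply Rlt_le, Rinv_0_lt_compat; lra|apply Q_window_bound]).
  assert (rho2 * sqn (d n) <= 3 * E m).
  { pose proof (E_stop_le_V (S m) ltac:(lia)). pose proof (V_succ_le_3E m Hm).
    pose proof (hinner_pos _ (r n)). pose proof (hinner_pos _ (s n)). nra. }
  assert (E n <= rsum (fun k => E (S k)) m (n - m)).
  { replace (n - m)%nat with (S (n - m - 1)) by lia. cbn [rsum].
    replace (S (m + (n - m - 1))) with n by lia.
    enough (0 <= rsum (fun k => E (S k)) m (n - m - 1)) by lra.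
    apply rsum_nonneg. intro k. apply E_nonneg. }
  assert (al * E n <= al * rsum (fun k => E (S k)) m (n - m)) by (apply Rmult_le_compat_l; lra).
  unfold Cbreg, Rdiv. lra.
Qed.

Local Notation q k := (hinner (mu k) (hsub (y n) yh) + rho2 * hinner (d k) (w n)).

Lemma gap_increment_bound k : (1 <= k)%nat ->
  Rabs (q (S k) - q k) <= (G (S k) + G n) / 2 + Rabs (rho1 * hinner (r (S k)) e).
Proof.
  intro Hk. rewrite (multiplier_gap_increment n k Hk ltac:(lia)).
  pose proof (inner_young (r (S k)) (r n) 1 ltac:(lra)) as Yr.
  pose proof (inner_young (s (S k)) (s n) 1 ltac:(lra)) as Ys.
  rewrite Rinv_1 in Yr, Ys.
  assert (rho1 * (2 * Rabs (hinner (r (S k)) (r n))) <= rho1 * (1 * sqn (r (S k)) + 1 * sqn (r n)))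
    by (apply Rmult_le_compat_l; lra).
  assert (rho2 * (2 * Rabs (hinner (s (S k)) (s n))) <= rho2 * (1 * sqn (s (S k)) + 1 * sqn (s n)))
    by (apply Rmult_le_compat_l; lra).
  replace (- rho1 * hinner (r (S k)) (r n) - rho1 * hinner (r (S k)) e - rho2 * hinner (s (S k)) (s n))
    with (- (rho1 * hinner (r (S k)) (r n)) + - (rho1 * hinner (r (S k)) e)
          + - (rho2 * hinner (s (S k)) (s n))) by ring.
  eapply Rle_trans; [apply Rabs_triang|].
  eapply Rle_trans; [apply Rplus_le_compat_r, Rabs_triang|].
  rewrite !Rabs_Ropp, (Rabs_mult rho1 (hinner _ (r n))), (Rabs_mult rho2),
    (Rabs_right rho1), (Rabs_right rho2) by lra.
  lra.
Qed.

Lemma gap_step_bound k : (m <= k)%nat -> (S k < n)%nat -> Rabs (q (S k) - q k) <= 5 / 2 * E (S k).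
Proof.
  intros Hk1 Hk2.
  pose proof (gap_increment_bound k ltac:(lia)).
  pose proof (noise_before_stop (S k) ltac:(lia) Hk2).
  pose proof (E_stop_le_V (S k) ltac:(lia)). pose proof (V_le_2E (S k)).
  pose proof (hinner_pos _ (r (S k))). pose proof (hinner_pos _ (s (S k))).
  pose proof (hinner_pos _ (d (S k))). pose proof (hinner_pos _ (d n)).
  assert (G (S k) / tau <= G (S k)) by (apply div_tau_le; [lra|nra]).
  nra.
Qed.

Lemma gap_last_bound : Rabs (q n - q (n - 1)%nat) <= 2 * E n + M * tau * delta ^ 2.
Proof.
  pose proof (gap_increment_bound (n - 1) ltac:(lia)) as Hinc.
  replace (S (n - 1)) with n in Hinc by lia.
  pose proof (noise_any n).
  pose proof (hinner_pos _ (r n)). pose proof (hinner_pos _ (s n)). pose proof (hinner_pos _ (d n)).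
  assert (G n / tau <= G n) by (apply div_tau_le; [lra|nra]).
  nra.
Qed.

Lemma cross_stop_bound k : Rabs (rho2 * hinner (d k) (w n)) <= E k / 2 + rho2 / 2 * sqn (w n).
Proof.
  pose proof (inner_young (d k) (w n) 1 ltac:(lra)) as Hy. rewrite Rinv_1 in Hy.
  assert (rho2 * (2 * Rabs (hinner (d k) (w n))) <= rho2 * (1 * sqn (d k) + 1 * sqn (w n)))
    by (apply Rmult_le_compat_l; lra).
  pose proof (hinner_pos _ (r k)). pose proof (hinner_pos _ (s k)).
  rewrite Rabs_mult, (Rabs_right rho2) by lra. nra.
Qed.

Lemma multiplier_estimate :
  Rabs (hinner (mu n) (hsub (y n) yh))
  <= Rabs (hinner (mu m) (hsub (y n) yh)) + M * tau * delta ^ 2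
     + 3 * rsum (fun k => E k) m (S (n - m)) + rho2 * sqn (w n).
Proof.
  rewrite rsum_cons, <- rsum_shift. cbv beta.
  set (qf := fun k => q k).
  pose proof (telescope_Rabs qf m (n - m)) as Htel.
  replace (m + (n - m))%nat with n in Htel by lia.
  replace (n - m)%nat with (S (n - m - 1)) in Htel |- * by lia. cbn [rsum] in Htel |- *.
  replace (m + (n - m - 1))%nat with (n - 1)%nat in Htel by lia.
  replace (S (n - 1)) with n in Htel by lia.
  replace (S (m + (n - m - 1))) with n by lia.
  assert (Hsteps : rsum (fun k => Rabs (qf (S k) - qf k)) m (n - m - 1)
                   <= 5 / 2 * rsum (fun k => E (S k)) m (n - m - 1)).
  { rewrite <- rsum_scal. apply rsum_le. intros k Hk. apply gap_step_bound; lia. }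
  assert (HE : 0 <= rsum (fun k => E (S k)) m (n - m - 1)).
  { apply rsum_nonneg. intro k. apply E_nonneg. }
  pose proof gap_last_bound. pose proof (cross_stop_bound n). pose proof (cross_stop_bound m).
  pose proof (E_nonneg m). pose proof (E_nonneg n).
  replace (hinner (mu n) (hsub (y n) yh))
    with (hinner (mu m) (hsub (y n) yh) + (qf n - qf m) + - (rho2 * hinner (d n) (w n))
          + rho2 * hinner (d m) (w n)) by (unfold qf; ring).
  eapply Rle_trans; [apply Rabs_triang|].
  eapply Rle_trans; [apply Rplus_le_compat_r, Rabs_triang|].
  eapply Rle_trans; [apply Rplus_le_compat_r, Rplus_le_compat_r, Rabs_triang|].
  rewrite Rabs_Ropp. unfold qf in *. cbv beta in *. lra.
Qed.

Lemma bregman_bound :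
  bregman f (mu n) yh (y n) + al * Ek A W rho1 rho2 bd x y n
  <= bregman f (mu m) yh (y m) + M * tau * delta ^ 2
     + Cfinal rho2 tau c0 * hnorm (W (hsub xh (x m))) ^ 2
     + Cfinal rho2 tau c0 * Ek A W rho1 rho2 bd x y m
     + Cfinal rho2 tau c0 * hnorm (hsub (W (x m)) (y m)) ^ 2
     + Cfinal rho2 tau c0 * Rabs (hinner (hsub (y (m - 1)%nat) (y m)) (W (hsub xh (x (m + 1)%nat)))).
Proof.
  rewrite !Ek_expand, W_xh_sub_sq, cross_term_eq, hnorm_sq by lia.
  pose proof bregman_estimate.
  destruct (Cfinal_ge rho2 tau c0 Hrho2 Htau Hc0) as (HCb & HCr & _).
  pose proof (Cbreg_pos rho2 tau c0 Hrho2 Htau Hc0).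
  pose proof (hinner_pos _ (w m)). pose proof (hinner_pos _ (s m)).
  pose proof (E_nonneg m).
  pose proof (Rle_abs (hinner (d m) (w (S m)))). pose proof (Rabs_pos (hinner (d m) (w (S m)))).
  assert (Cbreg rho2 tau c0 * E m <= Cfinal rho2 tau c0 * E m) by (apply Rmult_le_compat_r; lra).
  assert (rho2 / 2 * sqn (w m) <= Cfinal rho2 tau c0 * sqn (w m)) by (apply Rmult_le_compat_r; lra).
  assert (rho2 * hinner (d m) (w (S m)) <= rho2 * Rabs (hinner (d m) (w (S m))))
    by (apply Rmult_le_compat_l; lra).
  assert (rho2 * Rabs (hinner (d m) (w (S m))) <= Cfinal rho2 tau c0 * Rabs (hinner (d m) (w (S m))))
    by (apply Rmult_le_compat_r; lra).
  assert (0 <= Cfinal rho2 tau c0 * sqn (s m)) by (apply Rmult_le_pos; lra).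
  lra.
Qed.

Lemma multiplier_bound :
  Rabs (hinner (mu n) (hsub (y n) yh))
  <= Rabs (hinner (mu m) (hsub (y n) yh)) + M * tau * delta ^ 2
     + Cfinal rho2 tau c0 * sum_f_R0 (fun i => Ek A W rho1 rho2 bd x y (m + i)) (n - m)
     + Cfinal rho2 tau c0 * hnorm (W (hsub (x n) xh)) ^ 2.
Proof.
  rewrite sum_f_R0_rsum, W_sub_xh_sq by lia.
  rewrite (rsum_ext _ (fun k => E k)) by (intro; apply Ek_expand).
  pose proof multiplier_estimate.
  destruct (Cfinal_ge rho2 tau c0 Hrho2 Htau Hc0) as (_ & HCr & HC3).
  pose proof (hinner_pos _ (w n)).
  assert (0 <= rsum (fun k => E k) m (S (n - m))).
  { apply rsum_nonneg. intro k. apply E_nonneg. }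
  assert (3 * rsum (fun k => E k) m (S (n - m))
          <= Cfinal rho2 tau c0 * rsum (fun k => E k) m (S (n - m)))
    by (apply Rmult_le_compat_r; lra).
  assert (rho2 * sqn (w n) <= Cfinal rho2 tau c0 * sqn (w n)) by (apply Rmult_le_compat_r; lra).
  lra.
Qed.

End StoppingIndex.

End FeasiblePoint.
End ADMM.

Theorem lemma2p12 :
  forall rho2 tau c0 : R, 0 < rho2 -> 1 < tau -> 0 < c0 ->
  exists c C : R, 0 < c /\ 0 < C /\
  forall (X Y H : Hilbert) (A : X -> H) (DW : X -> Prop) (W : X -> Y) (f : Y -> ereal)
         (b bd : H) (delta rho1 : R)
         (x : nat -> X) (y : nat -> Y) (lam : nat -> H) (mu : nat -> Y) (kd : nat),
    bounded_linear A ->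
    proper f -> lsc f -> strongly_convex f c0 ->
    densely_defined_closed DW W ->
    coercive_pair A DW W ->
    consistent A DW W f b ->
    0 < rho1 ->
    0 < delta -> hnorm (hsub bd b) <= delta ->
    admm A DW W f rho1 rho2 bd x y lam mu ->
    (1 <= kd)%nat ->
    stop_cond A W rho1 rho2 tau delta bd x y kd ->
    (forall k, (1 <= k)%nat -> (k < kd)%nat -> ~ stop_cond A W rho1 rho2 tau delta bd x y k) ->
    forall m : nat, (1 <= m)%nat -> (m + 1 < kd)%nat ->
    forall (xh : X) (yh : Y), feasible A DW W f b xh yh ->
      bregman f (mu kd) yh (y kd) + c * Ek A W rho1 rho2 bd x y kd
      <= bregman f (mu m) yh (y m) + Rmax rho1 rho2 * tau * delta ^ 2
         + C * (hnorm (W (hsub xh (x m)))) ^ 2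
         + C * Ek A W rho1 rho2 bd x y m
         + C * (hnorm (hsub (W (x m)) (y m))) ^ 2
         + C * Rabs (hinner (hsub (y (m - 1)%nat) (y m)) (W (hsub xh (x (m + 1)%nat))))
    /\
      Rabs (hinner (mu kd) (hsub (y kd) yh))
      <= Rabs (hinner (mu m) (hsub (y kd) yh)) + Rmax rho1 rho2 * tau * delta ^ 2
         + C * sum_f_R0 (fun i => Ek A W rho1 rho2 bd x y (m + i)) (kd - m)
         + C * (hnorm (W (hsub (x kd) xh))) ^ 2.
Proof.
  intros rho2 tau c0 Hrho2 Htau Hc0.
  exists (alpha rho2 tau c0), (Cfinal rho2 tau c0).
  split; [now apply alpha_pos|]. split; [now apply Cfinal_pos|].
  intros X Y H A DW W f b bd delta rho1 x y lam mu kd HA Hf _ Hfc HW _ _ Hrho1 _ Hnoise Hadm _ _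
    Hbefore_stop m Hm Hmn xh yh (Hxh & _ & HAxh & HWxh).
  split; [eapply bregman_bound | eapply multiplier_bound]; eauto.
Qed.
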